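(* Let $f:[0,\infty)\to\mathbb{R}$ be a continuous superquadratic function, let $\Phi:\mathbb{M}_n\to\mathbb{M}_m$ be a unital positive linear map, and let $\tau$ be a state on $\mathbb{M}_m$. Then for every positive semidefinite $A\in\mathbb{M}_n^+$, $$f\big(\tau(\Phi(A))\big)\le \tau\big(\Phi(f(A))\big)-\tau\Big(\Phi\big(f(|A-\tau(\Phi(A))I|)\big)\Big).$$
   Context: A function $f:[0,\infty)\to\mathbb{R}$ is called superquadratic if for every $s\ge 0$ there exists a constant $C_s\in\mathbb{R}$ such that $f(t)\ge f(s)+C_s(t-s)+f(|t-s|)$ for all $t\ge0$. A linear map $\Phi$ is positive if it maps positive semidefinite matrices to positive semidefinite matrices and unital if $\Phi(I)=I$. A state on $\mathbb{M}_m$ is a positive linear functional $\tau$ with $\tau(I)=1$. $f(X)$ is defined by the spectral functional calculus and $|X|=(X^*X)^{1/2}$. *)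

From HB Require Import structures.
From mathcomp Require Import all_boot all_order all_algebra.
Set Implicit Arguments. Unset Strict Implicit. Unset Printing Implicit Defensive.
Import Order.TTheory GRing.Theory Num.Theory.
Local Open Scope ring_scope.
Local Open Scope sesquilinear_scope.

Section Defs.
Variable C : numClosedFieldType.

Definition adjmx m n (A : 'M[C]_(m, n)) : 'M[C]_(n, m) := A ^t*.

Definition psdmx n (A : 'M[C]_n) : Prop :=
  adjmx A = A /\ forall v : 'rV[C]_n, 0 <= (v *m A *m adjmx v) 0 0.

(* spectral functional calculus: for a normal A = P^-1 diag(d) P (P unitary,
   given by mathcomp's spectral theorem), f(A) := P^-1 diag(f d) P *)
Definition fcalc n (f : C -> C) (A : 'M[C]_n) : 'M[C]_n :=
  invmx (spectralmx A) *m diag_mx (map_mx f (spectral_diag A)) *m spectralmx A.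

Definition absmx n (X : 'M[C]_n) : 'M[C]_n := fcalc (fun x : C => sqrtC x) (adjmx X *m X).

Definition superquadratic (f : C -> C) : Prop :=
  forall s, 0 <= s -> exists Cs : C, Cs \is Num.real /\
    forall t, 0 <= t -> f s + Cs * (t - s) + f `|t - s| <= f t.

Definition cont_nonneg (f : C -> C) : Prop :=
  forall x, 0 <= x -> forall e : C, 0 < e -> exists2 d : C, 0 < d &
    forall y, 0 <= y -> `|y - x| < d -> `|f y - f x| < e.

Definition real_on_nonneg (f : C -> C) : Prop :=
  forall x, 0 <= x -> f x \is Num.real.

Definition positive_map n m (Phi : 'M[C]_n -> 'M[C]_m) : Prop :=
  forall A, psdmx A -> psdmx (Phi A).

Definition unital_map n m (Phi : 'M[C]_n -> 'M[C]_m) : Prop :=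
  Phi 1%:M = 1%:M.

Definition is_state m (tau : 'M[C]_m -> C) : Prop :=
  scalar tau /\ (forall A, psdmx A -> 0 <= tau A) /\ tau 1%:M = 1.

End Defs.

(** The Jensen-type inequality comes from applying the state [E := tau \o Phi]
    to a matrix that is positive semidefinite by superquadraticity.  With
    [s := E(A)] and [C_s] the constant of the definition at [s], the scalar
    inequality [f s + C_s (t - s) + f |t - s| <= f t] holds at every eigenvalue
    [t >= 0] of [A]; since [f A], [A - s] and [|A - s|] are all diagonalised by
    the same unitary matrix as [A], this means
    [f A - f(s) I - C_s (A - s I) - f |A - s I|] is positive semidefinite.  As
    [E] is a state, the linear term vanishes and we are left with the claim. *)
From HB Require Import structures.
From mathcomp Require Import all_boot all_order all_algebra.
From mathcomp Require Import ring.
Set Implicit Arguments. Unset Strict Implicit. Unset Printing Implicit Defensive.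
Import Order.TTheory GRing.Theory Num.Theory.
Local Open Scope ring_scope.
Local Open Scope sesquilinear_scope.

Lemma scalarB (R : pzRingType) (U : lmodType R) (E : U -> R) :
  scalar E -> forall u v, E (u - v) = E u - E v.
Proof. by move=> E_lin u v; rewrite addrC -scaleN1r E_lin mulN1r addrC. Qed.

Lemma scalarZ (R : pzRingType) (U : lmodType R) (E : U -> R) :
  scalar E -> forall a u, E (a *: u) = a * E u.
Proof.
move=> E_lin a u; have E0 : E 0 = 0 by rewrite -(subrr 0) scalarB // subrr.
by rewrite -[a *: u]addr0 E_lin E0 addr0.
Qed.

(* [W] can only link coordinates where [a] and [u] agree. *)
Lemma diag_mx_intertwine_map (R : idomainType) n (g : R -> R)
    (W : 'M[R]_n) (a u : 'rV[R]_n) :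
  W *m diag_mx a = diag_mx u *m W ->
  W *m diag_mx (map_mx g a) = diag_mx (map_mx g u) *m W.
Proof.
move=> Wau; apply/matrixP => i j; move/matrixP/(_ i j): Wau.
rewrite !mul_mx_diag !mul_diag_mx !mxE => Wau.
have [->|Wij] := eqVneq (W i j) 0; first by rewrite mul0r mulr0.
have -> : a 0 j = u 0 i by apply: (mulfI Wij); rewrite Wau mulrC.
by rewrite mulrC.
Qed.

Section UnitaryDiagonalForm.
Variable C : numClosedFieldType.

Definition conj_diag n (P : 'M[C]_n) (u : 'rV[C]_n) : 'M[C]_n :=
  invmx P *m diag_mx u *m P.

Lemma normalmx_spectral n (A : 'M[C]_n) :
  A \is normalmx -> A = conj_diag (spectralmx A) (spectral_diag A).
Proof. exact/orthomx_spectralP. Qed.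

Section FixedBasis.
Variables (n : nat) (P : 'M[C]_n).
Hypothesis P_unitary : P \is unitarymx.

Let P_unit : P \in unitmx := unitarymx_unit P_unitary.

Lemma conj_diagB (u w : 'rV[C]_n) :
  conj_diag P (u - w) = conj_diag P u - conj_diag P w.
Proof. by rewrite /conj_diag linearB /= mulmxBr mulmxBl. Qed.

Lemma conj_diagZ (c : C) (u : 'rV[C]_n) :
  conj_diag P (c *: u) = c *: conj_diag P u.
Proof. by rewrite /conj_diag linearZ /= -scalemxAr -scalemxAl. Qed.

Lemma conj_diag_const (c : C) : conj_diag P (const_mx c) = c%:M.
Proof.
by rewrite /conj_diag diag_const_mx mul_mx_scalar -scalemxAl mulVmx // scalemx1.
Qed.

Lemma conj_diagM (u w : 'rV[C]_n) :
  conj_diag P u *m conj_diag P w = conj_diag P (\row_j (u 0 j * w 0 j)).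
Proof.
rewrite /conj_diag !mulmxA mulmxK //; congr (_ *m _); rewrite -!mulmxA.
congr (_ *m _); apply/matrixP => i j; rewrite mul_diag_mx !mxE.
by case: eqP => [->|]; rewrite ?mulr1n ?mulr0n ?mulr0.
Qed.

Lemma conj_diag_adj (u : 'rV[C]_n) :
  adjmx (conj_diag P u) = conj_diag P (map_mx Num.conj u).
Proof.
rewrite /adjmx /conj_diag invmx_unitary // !trmx_mul !map_mxM trmxCK !mulmxA.
by rewrite tr_diag_mx map_diag_mx.
Qed.

Lemma fcalc_conj_diag (g : C -> C) (u : 'rV[C]_n) :
  fcalc g (conj_diag P u) = conj_diag P (map_mx g u).
Proof.
set B := conj_diag P u.
have B_normal : B \is normalmx.
  by apply/orthomx_spectral_subproof; exists (P, u).
have eB := normalmx_spectral B_normal.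
rewrite /fcalc; move: eB; set U := spectralmx B; set a := spectral_diag B => eB.
have U_unit : U \in unitmx := spectral_unit B.
have intertwine : (P *m invmx U) *m diag_mx a = diag_mx u *m (P *m invmx U).
  rewrite -mulmxA; have -> : invmx U *m diag_mx a = B *m invmx U.
    by rewrite eB /conj_diag mulmxK.
  by rewrite /B /conj_diag !mulmxA mulmxV // mul1mx.
have := congr1 (fun M => invmx P *m M *m U) (diag_mx_intertwine_map g intertwine).
by rewrite /conj_diag !mulmxA mulVmx // mul1mx mulmxKV // => ->.
Qed.

Lemma absmx_conj_diag (u : 'rV[C]_n) :
  absmx (conj_diag P u) = conj_diag P (map_mx Num.norm u).
Proof.
rewrite /absmx conj_diag_adj conj_diagM fcalc_conj_diag; congr conj_diag.
by apply/matrixP => i j; rewrite !mxE (ord1 i) mulrC -normCK sqrCK.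
Qed.

Lemma psd_conj_diag (u : 'rV[C]_n) :
  (forall j, 0 <= u 0 j) -> psdmx (conj_diag P u).
Proof.
move=> u_ge0; split.
  rewrite conj_diag_adj; congr conj_diag.
  by apply/matrixP => i j; rewrite mxE (ord1 i) geC0_conj.
move=> v; rewrite /adjmx /conj_diag invmx_unitary //.
set w := v *m P^t*.
have -> : v *m (P^t* *m diag_mx u *m P) *m v^t* = w *m diag_mx u *m w^t*.
  by rewrite /w !trmx_mul !map_mxM trmxCK !mulmxA.
rewrite mul_mx_diag !mxE; apply: sumr_ge0 => j _; rewrite !mxE.
by rewrite [_ * u 0 j]mulrC -mulrA -normCK mulr_ge0 // exprn_ge0.
Qed.

(* Test the quadratic form on the [j]-th column of [P^*]. *)
Lemma conj_diag_psd_ge0 (u : 'rV[C]_n) :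
  psdmx (conj_diag P u) -> forall j, 0 <= u 0 j.
Proof.
move=> [_ form_ge0] j; move: (form_ge0 (delta_mx 0 j *m P)).
rewrite /adjmx /conj_diag invmx_unitary //.
rewrite trmx_mul map_mxM !mulmxA !mulmxtVK // mul_mx_diag !mxE (bigD1 j) //=.
rewrite big1 => [|k kj]; rewrite !mxE ?eqxx /=.
  by rewrite mul1r conjC1 mulr1 addr0.
by rewrite (negbTE kj) !mul0r.
Qed.

End FixedBasis.

Lemma psd_normalmx n (A : 'M[C]_n) : psdmx A -> A \is normalmx.
Proof. by case=> A_herm _; apply/normalmxP; rewrite [A^t*]A_herm. Qed.

End UnitaryDiagonalForm.

Lemma comp_state (C : numClosedFieldType) n m (Phi : 'M[C]_n -> 'M[C]_m)
    (tau : 'M[C]_m -> C) :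
  linear Phi -> positive_map Phi -> unital_map Phi -> is_state tau ->
  is_state (tau \o Phi).
Proof.
move=> Phi_lin Phi_pos Phi1 [tau_lin [tau_pos tau1]]; split; last split.
- by move=> a u v; rewrite /= Phi_lin tau_lin.
- by move=> A /Phi_pos /tau_pos.
- by rewrite /= Phi1 tau1.
Qed.

Theorem superquadratic_state_jensen (C : numClosedFieldType) n
    (E : 'M[C]_n -> C) (f : C -> C) (A : 'M[C]_n) :
  is_state E -> superquadratic f -> psdmx A ->
  f (E A) <= E (fcalc f A) - E (fcalc f (absmx (A - (E A)%:M))).
Proof.
move=> [E_lin [E_pos E1]] f_sq A_psd; set s := E A.
have [Cs [_ Cs_sq]] := f_sq s (E_pos _ A_psd).
set P := spectralmx A; set d := spectral_diag A.
have P_unitary : P \is unitarymx := spectral_unitarymx A.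
have eA : A = conj_diag P d := normalmx_spectral (psd_normalmx A_psd).
have d_ge0 : forall j, 0 <= d 0 j.
  by apply: (conj_diag_psd_ge0 P_unitary); rewrite -eA.
set e := d - const_mx s.
have eAs : A - s%:M = conj_diag P e by rewrite conj_diagB ?conj_diag_const // -eA.
set x := map_mx f d - const_mx (f s) - Cs *: e - map_mx f (map_mx Num.norm e).
have x_psd : psdmx (conj_diag P x).
  apply: psd_conj_diag => // j; rewrite !mxE; set t := d 0 j.
  have -> : f t - f s - Cs * (t - s) - f `|t - s|
            = f t - (f s + Cs * (t - s) + f `|t - s|) by ring.
  by rewrite subr_ge0; exact: Cs_sq (d_ge0 j).
have x_expand : conj_diag P x = fcalc f A - (f s)%:M - Cs *: (A - s%:M)
                          - fcalc f (absmx (A - s%:M)).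
  rewrite !conj_diagB // conj_diagZ // conj_diag_const // eAs.
  by rewrite absmx_conj_diag // !fcalc_conj_diag // -eA.
have := E_pos _ x_psd; rewrite x_expand; set F := fcalc f (absmx _).
rewrite -[(f s)%:M]scalemx1 -[s%:M]scalemx1 !(scalarB E_lin) !(scalarZ E_lin).
rewrite (scalarB E_lin) (scalarZ E_lin) E1 -/s => Ex_ge0.
rewrite -subr_ge0 (_ : _ - _ - f s
  = E (fcalc f A) - f s * 1 - Cs * (s - s * 1) - E F) //; ring.
Qed.

Theorem lemma2p6 (C : numClosedFieldType) (n m : nat) (f : C -> C)
    (Phi : 'M[C]_n -> 'M[C]_m) (tau : 'M[C]_m -> C)
    (f_real : real_on_nonneg f) (f_cont : cont_nonneg f)
    (f_sq : superquadratic f)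
    (Phi_lin : linear Phi) (Phi_pos : positive_map Phi)
    (Phi_unital : unital_map Phi) (tau_state : is_state tau)
    (A : 'M[C]_n) (hA : psdmx A) :
  f (tau (Phi A)) <=
    tau (Phi (fcalc f A))
    - tau (Phi (fcalc f (absmx (A - (tau (Phi A))%:M)))).
Proof.
have E_state := comp_state Phi_lin Phi_pos Phi_unital tau_state.
exact: (superquadratic_state_jensen E_state f_sq hA).
Qed.
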